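(* Let $S=\{h_{\bm s}: \bm s\in\{\pm e_i,\ \pm e_j\pm e_k \mid 1\le i\le N,\ 1\le j<k\le N\}\}\subset\mathcal{H}_N$, let $\langle S\rangle$ be the Lie subalgebra of $\mathcal{H}_N$ generated by $S$, and let $L_S=\{\bm r\in\mathbb{Z}^N : h_{\bm r}\in\langle S\rangle\}$. Then $L_S=\mathbb{Z}^N$.
   Context: $\mathbb{K}$ is an algebraically closed field of characteristic zero, $N=2m\ge2$ even, $e_1,\dots,e_N$ the standard basis of $\mathbb{Z}^N\subset\mathbb{K}^N$, $(\cdot,\cdot)$ the bilinear form with $(e_i,e_j)=\delta_{ij}$. Let $A_N=\mathbb{K}[t_1^{\pm1},\dots,t_N^{\pm1}]$, $d_i=t_i\frac{\partial}{\partial t_i}$, $t^{\bm r}=t_1^{r_1}\cdots t_N^{r_N}$, $D(u,\bm r)=\sum_i u_it^{\bm r}d_i$. Let $\bm J=\begin{pmatrix} O_m & I_m\\ -I_m & O_m\end{pmatrix}$, $\overline{\bm r}=\bm J\bm r$, $h_{\bm r}=D(\overline{\bm r},\bm r)$ (so $h_{\bm 0}=0$). The Hamiltonian Lie algebra is $\mathcal{H}_N=\operatorname{span}_{\mathbb{K}}\{h_{\bm r}:\bm r\ne\bm0\}\oplus\operatorname{span}_{\mathbb{K}}\{d_1,\dots,d_N\}$ with commutator bracket; $[h_{\bm r},h_{\bm s}]=(\overline{\bm r},\bm s)h_{\bm r+\bm s}$. *)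

From HB Require Import structures.
From mathcomp Require Import all_boot all_order all_algebra all_field.
Set Implicit Arguments. Unset Strict Implicit. Unset Printing Implicit Defensive.
Import Order.TTheory GRing.Theory Num.Theory.
Local Open Scope ring_scope.

(* Hamiltonian Lie algebra H_N, N = m + m, over a field K.  An element of H_N is represented as a pair
   (formal finite linear combination  sum a * h_r  given as a list of
    (a, r) pairs,  vector u in K^N standing for D(u,0) = sum u_i d_i).
   Two representatives denote the same element of H_N iff they have the
   same d-part and, for every r <> 0, the same total coefficient on h_r
   (h_0 = 0, so entries with r = 0 are discarded). *)

Section Hamiltonian.
Variables (K : fieldType) (m : nat).
Local Notation N := (m + m)%N.
Local Notation vecZ := 'rV[int]_N.

(* \overline{r} = J r with J = [[0, I_m], [-I_m, 0]] *)
Definition Jbar (r : vecZ) : vecZ := row_mx (rsubmx r) (- lsubmx r).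

Definition formZ (x y : vecZ) : int := \sum_(i < N) x 0 i * y 0 i.

Definition formKZ (u : 'rV[K]_N) (s : vecZ) : K := \sum_(i < N) u 0 i * (s 0 i)%:~R.

Definition elt := (seq (K * vecZ) * 'rV[K]_N)%type.

Definition coef (X : elt) (r : vecZ) : K :=
  \sum_(p <- X.1 | p.2 == r) p.1.

Definition elt_eq (X Y : elt) : Prop :=
  X.2 = Y.2 /\ forall r : vecZ, r != 0 -> coef X r = coef Y r.

Definition hvec (r : vecZ) : elt := ([:: (1, r)], 0).

Definition elt_add (X Y : elt) : elt := (X.1 ++ Y.1, X.2 + Y.2).
Definition elt_scale (c : K) (X : elt) : elt :=
  ([seq (c * p.1, p.2) | p <- X.1], c *: X.2).

(* the commutator bracket, extended bilinearly from
   [h_r, h_s] = (rbar, s) h_{r+s},  [d_i, h_s] = s_i h_s,  [d_i, d_j] = 0 *)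
Definition elt_br (X Y : elt) : elt :=
  ([seq (p.1 * q.1 * (formZ (Jbar p.2) q.2)%:~R, p.2 + q.2) | p <- X.1, q <- Y.1]
   ++ [seq (formKZ X.2 q.2 * q.1, q.2) | q <- Y.1]
   ++ [seq (- (formKZ Y.2 p.2 * p.1), p.2) | p <- X.1], 0).

Definition unitZ (i : 'I_N) : vecZ := delta_mx 0 i.

Definition in_S_index (s : vecZ) : Prop :=
  (exists i : 'I_N, s = unitZ i \/ s = - unitZ i) \/
  (exists (j k : 'I_N) (a b : int), (j < k)%N /\ (a = 1 \/ a = -1) /\
       (b = 1 \/ b = -1) /\ s = a *: unitZ j + b *: unitZ k).

Inductive gen : elt -> Prop :=
| gen_S : forall s, in_S_index s -> gen (hvec s)
| gen_add : forall X Y, gen X -> gen Y -> gen (elt_add X Y)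
| gen_scale : forall c X, gen X -> gen (elt_scale c X)
| gen_br : forall X Y, gen X -> gen Y -> gen (elt_br X Y).

Definition L_S (r : vecZ) : Prop := exists X, gen X /\ elt_eq X (hvec r).

End Hamiltonian.

From Pilot Require Import Defs.
From HB Require Import structures.
From mathcomp Require Import all_boot all_order all_algebra all_field.
From mathcomp Require Import zify.
Set Implicit Arguments. Unset Strict Implicit. Unset Printing Implicit Defensive.
Import Order.TTheory GRing.Theory Num.Theory.
Local Open Scope ring_scope.

(* Call r reachable when some element of <S> is represented by c h_r with
   c <> 0.  As [h_a, h_b] = (abar, b) h_(a+b) and K has characteristic 0, r is
   reachable as soon as r - s and s are, for some s with (rbar, s) <> 0.  We
   induct on the l1-norm of r.  If two J-partner coordinates r_q, r_q' are
   both nonzero, s = sg(r_q) e_q lowers the norm and (rbar, s) = +-r_q' <> 0.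
   Otherwise pick r_p <> 0 and, unless r = sg(r_p) e_p is in S, a nonzero
   coordinate q of r - sg(r_p) e_p; then s = sg(r_p) e_p - e_q' keeps the norm,
   makes r - s paired at q, and (rbar, s) = +-r_q <> 0.  Finally h_0 = 0 is the
   multiple 0 h_(e_1). *)

Section SymplecticForm.
Variable m : nat.
Local Notation N := (m + m)%N.
Implicit Types (x y r s : 'rV[int]_N) (c : int) (p q : 'I_N).

Definition sform x y : int := Defs.formZ (Jbar x) y.

Definition jpartner p : 'I_N :=
  match split p with inl i => rshift m i | inr i => lshift m i end.

Definition jsign p : int := match split p with inl _ => 1 | inr _ => -1 end.

Lemma Jbar_entry r p : Jbar r 0 p = jsign p * r 0 (jpartner p).
Proof.
rewrite /jsign /jpartner /Jbar -[p in LHS]splitK.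
by case: (split p) => i /=; rewrite ?row_mxEl ?row_mxEr !mxE ?mul1r ?mulN1r.
Qed.

Lemma jpartnerK : involutive jpartner.
Proof.
move=> p; rewrite /jpartner -[p in RHS]splitK.
by case: (split p) => i; rewrite ?(unsplitK (inl i)) ?(unsplitK (inr i)).
Qed.

Lemma jpartner_neq p : jpartner p != p.
Proof.
rewrite /jpartner -[p in _ != p]splitK.
by case: (split p) => i /=; rewrite -val_eqE /=; have := ltn_ord i; lia.
Qed.

Lemma jsign_partner p : jsign (jpartner p) = - jsign p.
Proof.
rewrite /jsign /jpartner.
by case: (split p) => i; rewrite ?(unsplitK (inl i)) ?(unsplitK (inr i)).
Qed.

Lemma jsign_neq0 p : jsign p != 0.
Proof. by rewrite /jsign; case: (split p). Qed.

Lemma unitZ_entry p q : unitZ p 0 q = (p == q)%:R.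
Proof. by rewrite /unitZ mxE eq_sym. Qed.

Lemma sform_unitr x p : sform x (unitZ p) = jsign p * x 0 (jpartner p).
Proof.
rewrite /sform /Defs.formZ (bigD1 p) //= unitZ_entry eqxx mulr1 Jbar_entry big1 ?addr0 //.
by move=> q /negbTE qp; rewrite unitZ_entry eq_sym qp mulr0.
Qed.

Lemma sformBr x y s : sform x (y - s) = sform x y - sform x s.
Proof. by rewrite /sform /Defs.formZ -sumrB; apply: eq_bigr => i _; rewrite !mxE mulrBr. Qed.

Lemma sformZr x c s : sform x (c *: s) = c * sform x s.
Proof. by rewrite /sform /Defs.formZ mulr_sumr; apply: eq_bigr => i _; rewrite !mxE mulrCA. Qed.

Lemma sformBl x y s : sform (x - y) s = sform x s - sform y s.
Proof.
rewrite /sform /Defs.formZ -sumrB; apply: eq_bigr => i _.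
by rewrite !Jbar_entry !mxE mulrBr mulrBl.
Qed.

Lemma sform_self s : sform s s = 0.
Proof.
suff : sform s s = - sform s s by lia.
rewrite {1}/sform /Defs.formZ (reindex_inj (can_inj jpartnerK)) -sumrN.
by apply: eq_bigr => p _; rewrite !Jbar_entry jpartnerK jsign_partner !mulNr mulrAC.
Qed.

End SymplecticForm.

Section Coordinates.
Variable m : nat.
Local Notation N := (m + m)%N.
Implicit Types (x : 'rV[int]_N) (c z : int) (p q : 'I_N).

Definition l1norm x : nat := (\sum_(i < N) `|x 0%R i|)%N.

Lemma l1norm_update x q c :
  (l1norm (x + c *: unitZ q) + `|x 0%R q|)%N = (l1norm x + `|(x 0%R q + c)%R|)%N.
Proof.
rewrite /l1norm (bigD1 q) //= [in RHS](bigD1 q) //= !mxE !eqxx mulr1.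
rewrite (eq_bigr (fun i => `|x 0%R i|%N)).
  by rewrite -addnA addnC [X in (X + _)%N]addnC.
by move=> i /negbTE qi; rewrite !mxE qi andbF mulr0 addr0.
Qed.

Lemma absz_sub_sgr z : z != 0 -> (`|z - Num.sg z|).+1 = `|z|%N.
Proof. by case: sgrP => // z_sign _; lia. Qed.

Lemma l1norm_sub_sgr x q : x 0 q != 0 ->
  (l1norm (x - Num.sg (x 0 q) *: unitZ q)).+1 = l1norm x.
Proof.
move=> xq; have := l1norm_update x q (- Num.sg (x 0 q)).
by rewrite scaleNr -(absz_sub_sgr xq) addnS -addSn => /addIn.
Qed.

Lemma l1norm_add_unit x q : x 0 q = 0 -> l1norm (x + unitZ q) = (l1norm x).+1.
Proof. by move=> xq; have := l1norm_update x q 1; rewrite scale1r xq add0r; lia. Qed.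

Lemma entry_sub_unitZ_neq x c p q : p != q -> (x - c *: unitZ p) 0 q = x 0 q.
Proof. by move=> /negbTE pq; rewrite !mxE (eq_sym q) pq andbF mulr0 subr0. Qed.

Lemma entry_add_unitZ_neq x p q : p != q -> (x + unitZ p) 0 q = x 0 q.
Proof. by move=> /negbTE pq; rewrite !mxE (eq_sym q) pq andbF addr0. Qed.

Lemma entry_add_unitZ x p : (x + unitZ p) 0 p = x 0 p + 1.
Proof. by rewrite !mxE !eqxx. Qed.

Lemma sgr_pm1 z : z != 0 -> Num.sg z = 1 \/ Num.sg z = -1.
Proof. by case: sgrP => // _ _; [left | right]. Qed.

Lemma in_S_sgr z p : z != 0 -> in_S_index (Num.sg z *: unitZ p).
Proof.
by move=> /sgr_pm1[->|->]; left; exists p; [left; rewrite scale1r | right; rewrite scaleN1r].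
Qed.

Lemma in_S_sgr_sub z p q : z != 0 -> p != q -> in_S_index (Num.sg z *: unitZ p - unitZ q).
Proof.
move=> /sgr_pm1 sg_pm1 pq; right; rewrite -scaleN1r.
case: (ltngtP p q) => [lt_pq | lt_qp | /val_inj eq_pq]; last by rewrite eq_pq eqxx in pq.
- by exists p, q, (Num.sg z), (-1); do !split=> //; right.
- by exists q, p, (-1), (Num.sg z); rewrite addrC; do !split=> //; right.
Qed.

End Coordinates.

Section Monomials.
Variables (K : fieldType) (m : nat).
Local Notation N := (m + m)%N.
Implicit Types (r s t : 'rV[int]_N) (X Y : elt K m).

(* A syntactic form of "X = c h_r"; unlike [elt_eq] it is preserved by
   [elt_br] without computing any coefficient. *)
Definition monomial (c : K) r X :=
  X.2 = 0 /\ exists l, X.1 = (c, r) :: l /\ all (fun p => p.1 == 0) l.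

Lemma monomial_hvec r : monomial 1 r (hvec K r).
Proof. by split=> //; exists [::]. Qed.

Lemma monomial_scale a c r X : monomial c r X -> monomial (a * c) r (elt_scale a X).
Proof.
case=> X2 [l [X1 l0]]; split; first by rewrite /= X2 scaler0.
exists [seq (a * p.1, p.2) | p <- l]; split; first by rewrite /= X1.
by rewrite all_map; apply/allP => p /(allP l0)/eqP /= ->; rewrite mulr0.
Qed.

Lemma formKZ0 s : formKZ (0 : 'rV[K]_N) s = 0.
Proof. by rewrite /formKZ big1 // => i _; rewrite mxE mul0r. Qed.

Lemma monomial_br c1 c2 r1 r2 X Y : monomial c1 r1 X -> monomial c2 r2 Y ->
  monomial (c1 * c2 * (sform r1 r2)%:~R) (r1 + r2) (elt_br X Y).
Proof.
case=> X2 [l1 [X1 l10]] [Y2 [l2 [Y1 l20]]]; split=> //.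
pose f (p q : K * 'rV[int]_N) := (p.1 * q.1 * (sform p.2 q.2)%:~R, p.2 + q.2).
exists ([seq f (c1, r1) q | q <- l2] ++ [seq f p q | p <- l1, q <- (c2, r2) :: l2]
   ++ [seq (formKZ X.2 q.2 * q.1, q.2) | q <- Y.1]
   ++ [seq (- (formKZ Y.2 p.2 * p.1), p.2) | p <- X.1]).
split; first by rewrite /elt_br /= X1 Y1 /= -catA.
rewrite X2 Y2 !all_cat !all_map; apply/and4P; split.
- by apply/allP => q /(allP l20)/eqP /= ->; rewrite mulr0 mul0r.
- by apply/all_allpairsP => p q /(allP l10)/eqP /= -> _; rewrite !mul0r.
- by apply/allP => q _ /=; rewrite formKZ0 mul0r.
- by apply/allP => p _ /=; rewrite formKZ0 mul0r oppr0.
Qed.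

Lemma coef_monomial c r X t : monomial c r X -> coef X t = if r == t then c else 0.
Proof.
case=> _ [l [X1 l0]]; rewrite /coef X1 big_cons big1_seq ?addr0 //=.
by move=> p /andP[_ /(allP l0)/eqP].
Qed.

Lemma monomial_elt_eq c r X Y : monomial c r X -> monomial c r Y -> elt_eq X Y.
Proof.
move=> mX mY; split; first by rewrite mX.1 mY.1.
by move=> t _; rewrite (coef_monomial t mX) (coef_monomial t mY).
Qed.

End Monomials.

Section Reachability.
Variables (K : fieldType) (m : nat).
Hypothesis charK0 : [pchar K] =i pred0.
Local Notation N := (m + m)%N.
Implicit Types (r s x y : 'rV[int]_N).

Definition reachable r :=
  exists (c : K) (X : elt K m), [/\ c != 0, gen X & monomial c r X].

Lemma intr_eq0_pchar0 (z : int) : (z%:~R == 0 :> K) = (z == 0).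
Proof.
have natr_eq0 := (pcharf0P K).1 charK0.
by case: z => n; rewrite ?NegzE ?mulrNz ?oppr_eq0 -pmulrn natr_eq0.
Qed.

Lemma reachable_S s : in_S_index s -> reachable s.
Proof.
move=> Ss; exists 1, (hvec K s).
by split; [exact: oner_neq0 | exact: gen_S | exact: monomial_hvec].
Qed.

Lemma reachable_add x y :
  reachable x -> reachable y -> sform x y != 0 -> reachable (x + y).
Proof.
move=> [c1 [X [c1_neq0 gX mX]]] [c2 [Y [c2_neq0 gY mY]]] xy_neq0.
exists (c1 * c2 * (sform x y)%:~R), (elt_br X Y); split.
- by rewrite !mulf_neq0 // intr_eq0_pchar0.
- exact: gen_br.
- exact: monomial_br.
Qed.

Lemma reachable_of_sub r s :
  reachable (r - s) -> reachable s -> sform r s != 0 -> reachable r.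
Proof.
move=> rs s_reach rs_neq0; rewrite -(subrK s r).
by apply: reachable_add; rewrite // sformBl sform_self subr0.
Qed.

Lemma L_S_reachable r : reachable r -> L_S K r.
Proof.
move=> [c [X [c_neq0 gX mX]]]; exists (elt_scale c^-1 X); split; first exact: gen_scale.
apply: (@monomial_elt_eq _ _ 1 r); last exact: monomial_hvec.
by rewrite -(mulVf c_neq0); exact: monomial_scale.
Qed.

End Reachability.

Section Induction.
Variables (K : fieldType) (m : nat).
Hypothesis charK0 : [pchar K] =i pred0.
Local Notation N := (m + m)%N.
Implicit Types (r : 'rV[int]_N) (p q : 'I_N).
Variable n : nat.
Hypothesis IHn : forall x : 'rV[int]_N, (l1norm x < n)%N -> x != 0 -> reachable K x.

Lemma reachable_paired r q : (l1norm r <= n)%N ->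
  r 0 q != 0 -> r 0 (jpartner q) != 0 -> reachable K r.
Proof.
move=> r_le rq rq'; set s := Num.sg (r 0 q) *: unitZ q.
apply: (reachable_of_sub charK0 (s := s)).
- apply: IHn; first by rewrite -ltnS l1norm_sub_sgr.
  apply/rV0Pn; exists (jpartner q).
  by rewrite entry_sub_unitZ_neq // eq_sym jpartner_neq.
- exact/reachable_S/in_S_sgr.
- by rewrite sformZr sform_unitr !mulf_neq0 ?sgr_eq0 ?jsign_neq0.
Qed.

Lemma reachable_unpaired r p : (l1norm r <= n)%N ->
  (forall q, r 0 q != 0 -> r 0 (jpartner q) = 0) ->
  r 0 p != 0 -> r - Num.sg (r 0 p) *: unitZ p != 0 -> reachable K r.
Proof.
move=> r_le unpaired rp /rV0Pn[q]; set x := r - _ => xq.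
have rq : r 0 q != 0.
  by case: (eqVneq p q) => [<- // | pq]; rewrite /x entry_sub_unitZ_neq in xq.
have pq' : p != jpartner q by apply: contraNneq rp => ->; rewrite unpaired.
have xq' : x 0 (jpartner q) = 0 by rewrite entry_sub_unitZ_neq // unpaired.
set s := Num.sg (r 0 p) *: unitZ p - unitZ (jpartner q).
apply: (reachable_of_sub charK0 (s := s)).
- have -> : r - s = x + unitZ (jpartner q) by rewrite opprD opprK addrA.
  apply: (reachable_paired (q := q)).
  + by rewrite l1norm_add_unit // l1norm_sub_sgr.
  + by rewrite entry_add_unitZ_neq // jpartner_neq.
  + by rewrite entry_add_unitZ xq' add0r oner_neq0.
- exact/reachable_S/in_S_sgr_sub.
- rewrite sformBr sformZr !sform_unitr jpartnerK (unpaired p rp) !mulr0 sub0r.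
  by rewrite oppr_eq0 mulf_neq0 ?jsign_neq0.
Qed.

End Induction.

Lemma reachable_neq0 (K : fieldType) (m : nat) (charK0 : [pchar K] =i pred0)
  (r : 'rV[int]_(m + m)) : r != 0 -> reachable K r.
Proof.
have [n r_lt] := ubnP (l1norm r); elim: n => // n IHn in r r_lt *.
move=> r_neq0; have /rV0Pn[p rp] := r_neq0.
case: (boolP [exists q, (r 0 q != 0) && (r 0 (jpartner q) != 0)]).
  by case/existsP => q /andP[rq rq']; apply: (reachable_paired charK0 IHn r_lt rq rq').
move/existsPn => no_pair.
have unpaired q : r 0 q != 0 -> r 0 (jpartner q) = 0.
  by move=> rq; apply/eqP; move: (no_pair q); rewrite rq negbK.
case: (eqVneq (r - Num.sg (r 0 p) *: unitZ p) 0) => [/subr0_eq -> | x_neq0].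
  exact/reachable_S/in_S_sgr.
exact: (reachable_unpaired charK0 IHn r_lt unpaired rp x_neq0).
Qed.

Lemma L_S0 (K : fieldType) (m : nat) : (0 < m)%N -> L_S K (0 : 'rV[int]_(m + m)).
Proof.
move=> m_gt0; pose i0 : 'I_(m + m) := Ordinal (ltn_addr m m_gt0).
have mX := monomial_scale 0 (monomial_hvec K (unitZ i0)); rewrite mul0r in mX.
exists (elt_scale 0 (hvec K (unitZ i0))); split.
  by apply/gen_scale/gen_S; left; exists i0; left.
split=> [|t t_neq0]; first by rewrite mX.1.
rewrite (coef_monomial t mX) if_same (coef_monomial t (monomial_hvec K 0)).
by rewrite eq_sym (negbTE t_neq0).
Qed.

Theorem proposition2p3 (K : closedFieldType) (hK : [pchar K] =i pred0)
  (m : nat) (hm : (0 < m)%N) :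
  forall r : 'rV[int]_(m + m), L_S K r.
Proof.
move=> r; have [-> | r_neq0] := eqVneq r 0; first exact: L_S0.
exact/L_S_reachable/reachable_neq0.
Qed.
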